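(* Let $S:\mathbb{R}^m\times\mathbb{R}^n\to\mathbb{R}^q$ be a bilinear map with lifted linear operator $\mathscr{S}$, let $\mathcal{K}\subseteq\mathbb{R}^m\times\mathbb{R}^n$ be nonempty, and let $\mathcal{K}'\subseteq\mathbb{R}^{m\times n}$ be any set satisfying $\mathcal{K}'\cap\{W:\operatorname{rank}(W)\le 1\}=\{xy^T:(x,y)\in\mathcal{K}\}$. For $z\in\mathbb{R}^q$ let $\mathcal{K}_{\mathrm{opt}}(z)$ be the set of solutions of ''find $(x,y)\in\mathcal{K}$ with $S(x,y)=z$'' and $\mathcal{K}'_{\mathrm{opt}}(z)$ the set of minimizers of ''minimize $\operatorname{rank}(W)$ subject to $\mathscr{S}(W)=z$, $W\in\mathcal{K}'$''. Then $\mathcal{K}'_{\mathrm{opt}}(z)=\{xy^T:(x,y)\in\mathcal{K}_{\mathrm{opt}}(z)\}$ holds for every $z\in\{S(x,y):(x,y)\in\mathcal{K}\}$ if and only if it is not the case that $\{0\}\subsetneq\mathcal{K}'\cap\mathcal{N}(\mathscr{S},1)$.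
   Context: A map is bilinear if linear in each argument separately. For $j=1,\dots,q$ let $S_j\in\mathbb{R}^{m\times n}$ be the unique matrix with $(S(x,y))_j=x^TS_jy$; the lifted operator $\mathscr{S}:\mathbb{R}^{m\times n}\to\mathbb{R}^q$ is $(\mathscr{S}(W))_j=\operatorname{tr}(S_j^TW)$, so $\mathscr{S}(xy^T)=S(x,y)$. For $k\ge1$, $\mathcal{N}(\mathscr{S},k)=\{X\in\mathbb{R}^{m\times n}:\operatorname{rank}(X)\le k,\ \mathscr{S}(X)=0\}$. *)

From HB Require Import structures.
From mathcomp Require Import all_boot all_order all_algebra.
From mathcomp Require Import reals.
Set Implicit Arguments. Unset Strict Implicit. Unset Printing Implicit Defensive.
Import Order.TTheory GRing.Theory Num.Theory.
Local Open Scope ring_scope.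

Section Defs.
Variables (R : realType) (m n q : nat).

Definition bilinear_map (S : 'cV[R]_m -> 'cV[R]_n -> 'cV[R]_q) : Prop :=
  (forall (a : R) x1 x2 y, S (a *: x1 + x2) y = a *: S x1 y + S x2 y) /\
  (forall (a : R) x y1 y2, S x (a *: y1 + y2) = a *: S x y1 + S x y2).

(* S_j: the unique matrix with (S(x,y))_j = x^T S_j y, i.e. (S_j)_{ab} = S(e_a,e_b)_j. *)
Definition Smat (S : 'cV[R]_m -> 'cV[R]_n -> 'cV[R]_q) (j : 'I_q) : 'M[R]_(m, n) :=
  \matrix_(a < m, b < n) (S (delta_mx a 0) (delta_mx b 0)) j 0.

Definition lift (S : 'cV[R]_m -> 'cV[R]_n -> 'cV[R]_q) (W : 'M[R]_(m, n)) : 'cV[R]_q :=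
  \col_(j < q) \tr ((Smat S j)^T *m W).

Definition Nset (S : 'cV[R]_m -> 'cV[R]_n -> 'cV[R]_q) (k : nat) (X : 'M[R]_(m, n)) : Prop :=
  (\rank X <= k)%N /\ lift S X = 0.

Definition Kopt (S : 'cV[R]_m -> 'cV[R]_n -> 'cV[R]_q) (K : 'cV[R]_m * 'cV[R]_n -> Prop)
  (z : 'cV[R]_q) (p : 'cV[R]_m * 'cV[R]_n) : Prop :=
  K p /\ S p.1 p.2 = z.

Definition K'opt (S : 'cV[R]_m -> 'cV[R]_n -> 'cV[R]_q) (K' : 'M[R]_(m, n) -> Prop)
  (z : 'cV[R]_q) (W : 'M[R]_(m, n)) : Prop :=
  [/\ K' W, lift S W = z &
      forall W', K' W' -> lift S W' = z -> (\rank W <= \rank W')%N].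

End Defs.

From Pilot Require Import Defs.
From HB Require Import structures.
From mathcomp Require Import all_boot all_order all_algebra.
From mathcomp Require Import reals.
Import Order.TTheory GRing.Theory Num.Theory.
Local Open Scope ring_scope.

(* Since lift S (x y^T) = S x y and outer products are exactly the matrices of
   rank at most one, the feasible point x0 y0^T of the lifted problem bounds
   the minimal rank by 1, so every minimizer is an outer product x y^T with
   (x, y) solving the bilinear problem.  Conversely a solution x y^T fails to
   be a minimizer only if the rank-0 matrix 0 is feasible, i.e. z = 0, 0 is in
   K', and x y^T is a nonzero element of K' /\ N(lift S, 1).  This is exactly
   the excluded configuration. *)

Set Implicit Arguments.
Unset Strict Implicit.
Unset Printing Implicit Defensive.

Section BilinearLift.
Variables (R : realType) (m n q : nat) (S : 'cV[R]_m -> 'cV[R]_n -> 'cV[R]_q).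

Lemma lift_mx0 : Defs.lift S 0 = 0.
Proof. by apply/matrixP => j k; rewrite !mxE mulmx0 mxtrace0. Qed.

Hypothesis S_bilinear : bilinear_map S.

Lemma bilinear_addl x1 x2 y : S (x1 + x2) y = S x1 y + S x2 y.
Proof. by have := (proj1 S_bilinear) 1 x1 x2 y; rewrite !scale1r. Qed.

Lemma bilinear_addr x y1 y2 : S x (y1 + y2) = S x y1 + S x y2.
Proof. by have := (proj2 S_bilinear) 1 x y1 y2; rewrite !scale1r. Qed.

Lemma bilinear0l y : S 0 y = 0.
Proof. by apply: (addrI (S 0 y)); rewrite -bilinear_addl !addr0. Qed.

Lemma bilinear0r x : S x 0 = 0.
Proof. by apply: (addrI (S x 0)); rewrite -bilinear_addr !addr0. Qed.

Lemma bilinearZl c x y : S (c *: x) y = c *: S x y.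
Proof. by have := (proj1 S_bilinear) c x 0 y; rewrite addr0 bilinear0l addr0. Qed.

Lemma bilinearZr c x y : S x (c *: y) = c *: S x y.
Proof. by have := (proj2 S_bilinear) c x y 0; rewrite addr0 bilinear0r addr0. Qed.

Lemma bilinear_suml (I : Type) (r : seq I) (P : pred I) F y :
  S (\sum_(i <- r | P i) F i) y = \sum_(i <- r | P i) S (F i) y.
Proof.
apply: (big_rec2 (fun a b => S a y = b)); first exact: bilinear0l.
by move=> i a b _ <-; rewrite bilinear_addl.
Qed.

Lemma bilinear_sumr (I : Type) (r : seq I) (P : pred I) F x :
  S x (\sum_(i <- r | P i) F i) = \sum_(i <- r | P i) S x (F i).
Proof.
apply: (big_rec2 (fun a b => S x a = b)); first exact: bilinear0r.
by move=> i a b _ <-; rewrite bilinear_addr.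
Qed.

Lemma colv_sum_delta k (x : 'cV[R]_k) : x = \sum_a x a 0 *: delta_mx a 0.
Proof.
by rewrite {1}[x]matrix_sum_delta; apply: eq_bigr => a _; rewrite big_ord1.
Qed.

Lemma lift_outer x y : Defs.lift S (x *m y^T) = S x y.
Proof.
apply/matrixP => j k; rewrite (ord1 k) mxE /mxtrace.
rewrite [in RHS](colv_sum_delta x) bilinear_suml summxE.
under [RHS]eq_bigr => a _
  do rewrite [in S _ y](colv_sum_delta y) bilinearZl bilinear_sumr mxE summxE.
under [RHS]eq_bigr => a _ do rewrite big_distrr.
rewrite [RHS]exchange_big; apply: eq_bigr => b _; rewrite mxE.
apply: eq_bigr => a _; rewrite !mxE big_ord1 !mxE bilinearZr mxE /=.
by rewrite mulrC -mulrA.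
Qed.

End BilinearLift.

Lemma rank_outer (R : fieldType) m n (x : 'cV[R]_m) (y : 'cV[R]_n) :
  (\rank (x *m y^T) <= 1)%N.
Proof. exact: leq_trans (mxrankM_maxl _ _) (rank_leq_col x). Qed.

Section RankLifting.
Variables (R : realType) (m n q : nat) (S : 'cV[R]_m -> 'cV[R]_n -> 'cV[R]_q).
Variables (K : 'cV[R]_m * 'cV[R]_n -> Prop) (K' : 'M[R]_(m, n) -> Prop).
Hypothesis S_bilinear : bilinear_map S.
Hypothesis K'_rank1 : forall W : 'M[R]_(m, n),
  (K' W /\ (\rank W <= 1)%N) <-> exists x y, K (x, y) /\ W = x *m y^T.

Lemma K'_outer x y : K (x, y) -> K' (x *m y^T).
Proof. by move=> Kxy; case: (proj2 (K'_rank1 (x *m y^T))); first by exists x, y. Qed.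

Lemma K'opt0_eq0 W : K' 0 -> K'opt S K' 0 W -> W = 0.
Proof.
move=> K'0 [_ _ /(_ 0 K'0 (lift_mx0 S))].
by rewrite mxrank0 leqn0 mxrank_eq0 => /eqP.
Qed.

Lemma K'opt_outer z x0 y0 W : K (x0, y0) -> S x0 y0 = z ->
  K'opt S K' z W -> exists x y, Kopt S K z (x, y) /\ W = x *m y^T.
Proof.
move=> Kxy0 Sxy0 [K'W liftW Wmin].
have rankW : (\rank W <= 1)%N.
  apply: leq_trans (rank_outer x0 y0); apply: Wmin; first exact: K'_outer.
  by rewrite (lift_outer S_bilinear).
have [x [y [Kxy EW]]] := proj1 (K'_rank1 W) (conj K'W rankW).
by exists x, y; do !split=> //; rewrite -(lift_outer S_bilinear) -EW liftW.
Qed.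

Lemma Kopt_K'opt z x y :
  ~ ((K' 0 /\ Nset S 1 0) /\
     exists X : 'M[R]_(m, n), (K' X /\ Nset S 1 X) /\ X <> 0) ->
  Kopt S K z (x, y) -> K'opt S K' z (x *m y^T).
Proof.
move=> nondegenerate [Kxy Sxy]; have K'xy := K'_outer Kxy.
split=> //; first by rewrite (lift_outer S_bilinear).
move=> W' K'W' liftW'; have [W'0|W'_neq0] := eqVneq W' 0; last first.
  by rewrite (leq_trans (rank_outer x y)) // lt0n mxrank_eq0.
have z0 : z = 0 by rewrite -liftW' W'0 lift_mx0.
have [->|xy_neq0] := eqVneq (x *m y^T) 0; first by rewrite mxrank0.
case: nondegenerate; split.
  by rewrite -W'0; do !split=> //; rewrite W'0 ?mxrank0 ?lift_mx0.
exists (x *m y^T); split; last exact/eqP.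
by do !split; rewrite ?rank_outer // (lift_outer S_bilinear) Sxy z0.
Qed.

End RankLifting.

Theorem corollary1 (R : realType) (m n q : nat)
  (S : 'cV[R]_m -> 'cV[R]_n -> 'cV[R]_q)
  (K : 'cV[R]_m * 'cV[R]_n -> Prop) (K' : 'M[R]_(m, n) -> Prop) :
  bilinear_map S ->
  (exists p, K p) ->
  (forall W : 'M[R]_(m, n),
      (K' W /\ (\rank W <= 1)%N) <-> exists x y, K (x, y) /\ W = x *m y^T) ->
  ((forall z : 'cV[R]_q, (exists x y, K (x, y) /\ S x y = z) ->
      forall W : 'M[R]_(m, n),
        K'opt S K' z W <-> exists x y, Kopt S K z (x, y) /\ W = x *m y^T)
   <->
   ~ ((K' 0 /\ Nset S 1 0) /\
      exists X : 'M[R]_(m, n), (K' X /\ Nset S 1 X) /\ X <> 0)).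
Proof.
move=> S_bilinear _ K'_rank1; split.
- move=> lifting [[K'0 _] [X [[K'X [rankX liftX]] X_neq0]]].
  have [x [y [Kxy EX]]] := proj1 (K'_rank1 X) (conj K'X rankX).
  have Sxy : S x y = 0 by rewrite -(lift_outer S_bilinear) -EX.
  apply/X_neq0/(K'opt0_eq0 K'0).
  by apply/(lifting 0); [exists x, y | exists x, y].
- move=> nondegenerate z [x0 [y0 [Kxy0 Sxy0]]] W; split.
  + exact: (K'opt_outer S_bilinear K'_rank1 Kxy0 Sxy0).
  + by case=> x [y [Kopt_xy ->]]; exact: (Kopt_K'opt S_bilinear K'_rank1 nondegenerate).
Qed.
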